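(* Let $1 \le r \le n/2$ be integers and let $A$ be the adjacency matrix of the subgraph of the Hamming cube $\{0,1\}^n$ induced by $S(n,r-1)\cup S(n,r)$. Then: (i) For each $0 \le t \le r-1$, $A$ has a pair of eigenvalues $\pm\gamma_t$, where $\gamma_t = \sqrt{(r-t)(n-r-t+1)}$, each of multiplicity $\binom{n}{t}-\binom{n}{t-1}$ (with $\binom{n}{-1}:=0$). In addition $A$ has eigenvalue $0$ with multiplicity $\binom{n}{r}-\binom{n}{r-1}$. (ii) Given $0\le t\le r-1$ and $\lambda\in\{-\gamma_t,\gamma_t\}$, the eigenspace $W_t(\lambda)$ of $A$ corresponding to this pair $(t,\lambda)$ is described as follows: for $f \in W_t(\lambda)$ with restrictions $f_{r-1}, f_r$ to $S(n,r-1)$ and $S(n,r)$, the function $f_{r-1}$ can be chosen arbitrarily in the $t$-th eigenspace $V_t$ of $S(n,r-1)$, in which case $f_r$ is determined by $f_r(x) = \frac{1}{\lambda}\sum_{|y|=r-1,\ y\subset x} f_{r-1}(y)$; furthermore $f_r$ lies in the $t$-th eigenspace $V_t$ of $S(n,r)$. (iii) The eigenspace $W(0)$ corresponding to the eigenvalue $0$ contains the functions which vanish on $S(n,r-1)$ and whose restriction to $S(n,r)$ lies in the $r$-th eigenspace $V_r$ of $S(n,r)$.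
   Context: $\{0,1\}^n$ is the Hamming cube (vertices adjacent iff Hamming distance $1$); points are identified with subsets of $\{1,\dots,n\}$, and $|x|$ is the weight. $S(n,i)=\{x:|x|=i\}$ with inner product $\langle f,g\rangle=\sum_{x\in S(n,i)}f(x)g(x)$. For $|z|\le i$, $g_z$ on $S(n,i)$ is $1$ at $x$ if $z\subseteq x$ and $0$ otherwise; $U_j=\mathrm{span}\{g_z:|z|\le j\}$; the eigenspaces of $S(n,i)$ are $V_0=U_0$ (constants) and $V_j=U_j\cap U_{j-1}^\perp$ for $1\le j\le i$. *)

From HB Require Import structures.
From mathcomp Require Import all_boot all_order all_algebra.
Set Implicit Arguments. Unset Strict Implicit. Unset Printing Implicit Defensive.
Import Order.TTheory GRing.Theory Num.Theory.
Local Open Scope ring_scope.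

(* Points of {0,1}^n are subsets of 'I_n; weight = cardinality. *)

Definition hadj n (x y : {set 'I_n}) : bool :=
  #|(x :\: y) :|: (y :\: x)| == 1%N.

Definition layers (n r : nat) : {set {set 'I_n}} :=
  [set x : {set 'I_n} | (#|x| == r.-1) || (#|x| == r)].

Definition adjmx (R : nzRingType) n r : 'M[R]_#|layers n r| :=
  \matrix_(i, j) (hadj (enum_val i) (enum_val j))%:R.

(* A (row) vector seen as a function on {0,1}^n (zero outside the layers). *)
Definition vfun (R : nzRingType) n r (v : 'rV[R]_#|layers n r|)
  (x : {set 'I_n}) : R :=
  \sum_(i < #|layers n r|) (if enum_val i == x then v 0 i else 0).

Definition restr (R : nzRingType) n r (v : 'rV[R]_#|layers n r|) (k : nat)
  (x : {set 'I_n}) : R :=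
  if #|x| == k then vfun v x else 0.

Definition sdot (R : nzRingType) n (i : nat) (f g : {set 'I_n} -> R) : R :=
  \sum_(x : {set 'I_n} | #|x| == i) f x * g x.

Definition gz (R : nzRingType) (n : nat) (z x : {set 'I_n}) : R := (z \subset x)%:R.

Arguments gz R {n} z x.

(* h (viewed on S(n,i)) lies in U_j = span{g_z : |z| <= j} (with |z| <= i). *)
Definition inU (R : nzRingType) n (i j : nat) (h : {set 'I_n} -> R) : Prop :=
  exists c : {set 'I_n} -> R, forall x : {set 'I_n}, #|x| = i ->
    h x = \sum_(z : {set 'I_n} | (#|z| <= j)%N && (#|z| <= i)%N) c z * gz R z x.

(* h lies in the j-th eigenspace V_j of S(n,i):
   V_0 = U_0, V_j = U_j \cap U_{j-1}^perp. *)
Definition inV (R : nzRingType) n (i j : nat) (h : {set 'I_n} -> R) : Prop :=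
  inU i j h /\
  (if j is j'.+1 then forall h' : {set 'I_n} -> R, inU i j' h' -> sdot i h h' = 0
   else True).

Definition mult n t : nat :=
  ('C(n, t) - (if t is t'.+1 then 'C(n, t') else 0))%N.

From HB Require Import structures.
From mathcomp Require Import all_boot all_order all_algebra.
From mathcomp Require Import ring lra zify.
Set Implicit Arguments. Unset Strict Implicit. Unset Printing Implicit Defensive.
Import Order.TTheory GRing.Theory Num.Theory.
Local Open Scope ring_scope.

(* Let [up] : R^S(n,i) -> R^S(n,i+1) sum a function over the subsets of size
   one less, and [down] be its adjoint.  The adjacency matrix A maps a function
   (p, q) on S(n,r-1) u S(n,r) to (down q, up p), so (p, q) is a
   lam-eigenvector iff q = lam^-1 up p and down (up p) = lam^2 p.  On S(n,i),
   [down \o up] is triangular for the filtration U_0 <= U_1 <= ... with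
   diagonal entries theta_k = (i+1-k)(n-i-k); these are distinct for
   2 i < n, so its eigenspaces are exactly the V_t.
   For (i), V_t of S(n,t) is the kernel of [down], of dimension at least
   C(n,t) - C(n,t-1), and iterated [up] embeds it into the eigenspaces for
   +-gamma_t (resp. 0 when t = r); these lower bounds already add up to
   |S(n,r-1)| + |S(n,r)|, so they are all equalities. *)

Section Covers.
Variable n : nat.
Implicit Types x y : {set 'I_n}.

Definition covers x y := (y \subset x) && (#|y|.+1 == #|x|).

Lemma coversD1P x y : reflect (exists2 b, b \in x & y = x :\ b) (covers x y).
Proof.
apply: (iffP andP) => [[yx /eqP cxy] | [b bx ->]]; last first.
  by rewrite subD1set (cardsD1 b x) bx.
have /subsetPn[b bx bny] : ~~ (x \subset y).
  by apply: contraTN isT => /subset_leq_card; rewrite -cxy ltnn.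
exists b => //; apply/eqP; rewrite eqEcard; apply/andP; split.
  by apply/subsetP => c cy; rewrite !inE (subsetP yx) // andbT; apply: contraNneq bny => <-.
by have := cardsD1 b x; rewrite bx; lia.
Qed.

Lemma coversU1P x y : reflect (exists2 a, a \notin y & x = a |: y) (covers x y).
Proof.
apply: (iffP (coversD1P x y)) => [[a ax ->] | [a ay ->]].
  by exists a; rewrite ?setD1K // !inE eqxx.
by exists a; rewrite ?setU1K // !inE eqxx.
Qed.

Lemma hadjE x y : hadj x y = covers x y || covers y x.
Proof.
have coversE u v : covers u v = (#|v :\: u| == 0%N) && (#|u :\: v| == 1%N).
  rewrite /covers cards_eq0 setD_eq0; case: (boolP (v \subset u)) => //= vu.
  rewrite cardsD (setIidPr vu); have := subset_leq_card vu.
  by move: #|v| #|u| => a b ab; apply/eqP/eqP; lia.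
rewrite /hadj !coversE cardsU.
have -> : (x :\: y) :&: (y :\: x) = set0.
  by apply/setP => c; rewrite !inE; case: (c \in x); case: (c \in y).
rewrite cards0 subn0; move: #|x :\: y| #|y :\: x| => a b.
by case: a b => [|[|a]] [|[|b]].
Qed.

End Covers.

Section Shadows.
Variables (R : comNzRingType) (n : nat).
Implicit Types (x y z : {set 'I_n}) (f g : {set 'I_n} -> R).

Definition up f x : R := \sum_(b in x) f (x :\ b).

Definition down f y : R := \sum_(a | a \notin y) f (a |: y).

Lemma upE f x : up f x = \sum_(y | covers x y) f y.
Proof.
rewrite /up -big_imset /=; last first.
  by move=> b1 b2 b1x _ /setP/(_ b1); rewrite !inE eqxx b1x andbT; case: eqP.
by apply: eq_bigl => y; apply/imsetP/coversD1P.
Qed.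

Lemma downE f y : down f y = \sum_(x | covers x y) f x.
Proof.
rewrite /down (eq_bigl (fun a => a \in ~: y)); last by move=> a; rewrite inE.
rewrite -big_imset /=; last first.
  move=> a1 a2; rewrite inE => a1y _ /setP/(_ a1).
  by rewrite !inE eqxx (negbTE a1y) /= orbF => /esym/eqP.
by apply: eq_bigl => x; apply/imsetP/coversU1P => -[a ay ->]; exists a => //; move: ay; rewrite inE.
Qed.

Lemma up_layerE k f x : #|x| = k.+1 ->
  up f x = \sum_(y : {set 'I_n} | (#|y| == k) && (y \subset x)) f y.
Proof.
move=> cx; rewrite upE; apply: eq_bigl => y.
by rewrite /covers andbC cx eqSS.
Qed.

Lemma eq_up f g x : (forall y, #|y|.+1 = #|x| -> f y = g y) -> up f x = up g x.
Proof. by move=> fg; rewrite !upE; apply: eq_bigr => y /andP[_ /eqP]; apply: fg. Qed.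

Lemma eq_down f g y : (forall x, #|x| = #|y|.+1 -> f x = g x) -> down f y = down g y.
Proof. by move=> fg; rewrite !downE; apply: eq_bigr => x /andP[_ /eqP /esym]; apply: fg. Qed.

Lemma sum_hadj f x : \sum_y f y * (hadj y x)%:R = up f x + down f x.
Proof.
rewrite upE downE !(big_mkcond (fun y => covers _ _)) -big_split; apply: eq_bigr => y _ /=.
rewrite hadjE; case: (boolP (covers y x)) => [/andP[_ /eqP cyx] | _];
  case: (boolP (covers x y)) => [/andP[_ /eqP cxy] | _];
  by rewrite /= ?mulr1 ?mulr0 ?addr0 ?add0r //; lia.
Qed.

Definition dirac y : {set 'I_n} -> R := fun x => (x == y)%:R.

Lemma sum_dirac f x : \sum_y f y * dirac y x = f x.
Proof.
rewrite (bigD1 x) //= /dirac eqxx mulr1 big1 ?addr0 // => y /negbTE yx.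
by rewrite eq_sym yx mulr0.
Qed.

Definition linear_op (L : ({set 'I_n} -> R) -> {set 'I_n} -> R) :=
  forall f x, L f x = \sum_y f y * L (dirac y) x.

Lemma linear_op_sum (P : {set 'I_n} -> pred 'I_n) (phi : {set 'I_n} -> 'I_n -> {set 'I_n}) :
  linear_op (fun f x => \sum_(b | P x b) f (phi x b)).
Proof.
move=> f x; under [RHS]eq_bigr do rewrite mulr_sumr.
by rewrite exchange_big; apply: eq_bigr => b _; rewrite sum_dirac.
Qed.

Lemma linear_op_up : linear_op up. Proof. exact: linear_op_sum. Qed.

Lemma linear_op_down : linear_op down. Proof. exact: linear_op_sum. Qed.

Lemma linear_op_comp L M : linear_op L -> linear_op M -> linear_op (fun f => L (M f)).
Proof.
move=> linL linM f x; rewrite linL.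
under eq_bigr do rewrite linM mulr_suml.
rewrite exchange_big; apply: eq_bigr => w _; rewrite [in RHS]linL mulr_sumr.
by apply: eq_bigr => y _; rewrite mulrA.
Qed.

Lemma linear_op_iter_up k : linear_op (iter k up).
Proof.
elim: k => [|k IH] f x /=; first by rewrite sum_dirac.
exact: linear_op_comp linear_op_up IH f x.
Qed.

Section LinearOp.
Variable L : ({set 'I_n} -> R) -> {set 'I_n} -> R.
Hypothesis linL : linear_op L.

Lemma linear_op_lincomb (I : Type) (s : seq I) (P : pred I) (c : I -> R)
    (F : I -> {set 'I_n} -> R) x :
  L (fun y => \sum_(j <- s | P j) c j * F j y) x = \sum_(j <- s | P j) c j * L (F j) x.
Proof.
rewrite linL; under eq_bigr do rewrite mulr_suml.
rewrite exchange_big; apply: eq_bigr => j _; rewrite [in RHS]linL mulr_sumr.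
by apply: eq_bigr => y _; rewrite mulrA.
Qed.

Lemma linear_opZ a f x : L (fun y => a * f y) x = a * L f x.
Proof. by rewrite linL [in RHS]linL mulr_sumr; apply: eq_bigr => y _; rewrite mulrA. Qed.

Lemma linear_op0 x : L (fun _ => 0) x = 0.
Proof. by rewrite linL big1 // => y _; rewrite mul0r. Qed.

End LinearOp.

Lemma up_gz z x : up (gz R z) x = (#|x|%:R - #|z|%:R) * gz R z x.
Proof.
rewrite /up /gz; have [zx | nzx] := boolP (z \subset x); last first.
  rewrite mulr0 big1 // => b _; case: (boolP (z \subset x :\ b)) => // zxb.
  by case/negP: nzx; apply: subset_trans zxb (subD1set x b).
have zxbE b : b \in x -> (z \subset x :\ b) = (b \notin z).
  move=> bx; apply/idP/idP => [zxb | bz].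
    by apply/negP => bz; have := subsetP zxb b bz; rewrite !inE eqxx.
  apply/subsetP => c cz; rewrite !inE (subsetP zx) // andbT.
  by apply: contraNneq bz => <-.
rewrite mulr1 (eq_bigr (fun b => if b \notin z then 1 else 0)) => [|b bx]; last first.
  by rewrite zxbE //; case: (b \notin z).
rewrite -big_mkcondr (eq_bigl (fun b => b \in x :\: z)) => [|b]; last first.
  by rewrite inE andbC.
by rewrite sumr_const cardsD (setIidPr zx) natrB ?subset_leq_card.
Qed.

Lemma down_gz z y : down (gz R z) y =
  ((n - #|y|)%:R - #|z|%:R) * gz R z y + \sum_(a in z) gz R (z :\ a) y.
Proof.
rewrite /down /gz; have [zy | nzy] := boolP (z \subset y).
  have zUy a : z \subset a |: y by apply: subset_trans zy (subsetUr _ _).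
  have zDy a : z :\ a \subset y by apply: subset_trans (subD1set z a) zy.
  under eq_bigr do rewrite zUy.
  under [X in _ = _ + X]eq_bigr do rewrite zDy.
  rewrite !sumr_const mulr1 subrK; congr (_%:R).
  by rewrite (eq_card (B := ~: y)) => [|a]; rewrite ?inE // cardsCs setCK card_ord.
rewrite mulr0 add0r big_mkcond [RHS]big_mkcond; apply: eq_bigr => a _ /=.
rewrite -subDset; case: (boolP (z :\ a \subset y)) => [zay|]; last by case: ifP; case: ifP.
suff [-> ->] : a \in z /\ a \notin y by [].
have zUy : {subset z <= a |: y} by apply/subsetP; rewrite -subDset.
split; apply: contraNT nzy => ha; apply/subsetP => c cz; have := zUy c cz; rewrite !inE.
  by case: eqP => // ca; rewrite -ca cz in ha.
by case: eqP => // ->; rewrite negbK in ha.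
Qed.

Lemma sdotC i f g : sdot i f g = sdot i g f.
Proof. by apply: eq_bigr => x _; rewrite mulrC. Qed.

Lemma eq_sdot i f f' g : (forall x, #|x| = i -> f x = f' x) -> sdot i f g = sdot i f' g.
Proof. by move=> ff'; apply: eq_bigr => x /eqP cx; rewrite ff'. Qed.

Lemma sdot_eq0l i f g : (forall x, #|x| = i -> f x = 0) -> sdot i f g = 0.
Proof. by move=> f0; rewrite /sdot big1 // => x /eqP cx; rewrite f0 ?mul0r. Qed.

Lemma sdotZl i a f g : sdot i (fun x => a * f x) g = a * sdot i f g.
Proof. by rewrite /sdot mulr_sumr; apply: eq_bigr => x _; rewrite mulrA. Qed.

Lemma sdotBl i f f' g : sdot i (fun x => f x - f' x) g = sdot i f g - sdot i f' g.
Proof. by rewrite /sdot -sumrB; apply: eq_bigr => x _; rewrite mulrBl. Qed.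

Lemma sdot_suml i (I : Type) (s : seq I) (P : pred I) (F : I -> {set 'I_n} -> R) g :
  sdot i (fun x => \sum_(j <- s | P j) F j x) g = \sum_(j <- s | P j) sdot i (F j) g.
Proof. by rewrite /sdot exchange_big; apply: eq_bigr => x _; rewrite mulr_suml. Qed.

Lemma sdot_up i f g : sdot i.+1 (up f) g = sdot i f (down g).
Proof.
rewrite /sdot (eq_bigr (fun x => \sum_(y | covers x y) f y * g x)); last first.
  by move=> x _; rewrite upE mulr_suml.
rewrite (exchange_big_dep (fun y => #|y| == i)) /=; last first.
  by move=> x y /eqP cx /andP[_ /eqP]; rewrite cx => -[->].
apply: eq_bigr => y /eqP cy; rewrite downE mulr_sumr; apply: eq_bigl => x.
by apply: andb_idl => /andP[_ /eqP <-]; rewrite cy.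
Qed.

Lemma sdot_down_up i f g : sdot i (down (up f)) g = sdot i f (down (up g)).
Proof. by rewrite sdotC -sdot_up sdotC sdot_up. Qed.

Lemma down_sdot f y : down f y = sdot #|y|.+1 f (gz R y).
Proof.
rewrite downE /sdot /covers big_mkcond [RHS]big_mkcond; apply: eq_bigr => x _.
by rewrite /gz eq_sym; case: (y \subset x); case: (_ == _); rewrite /= ?mulr1 ?mulr0.
Qed.

End Shadows.

Section Filtration.
Variables (R : comNzRingType) (n : nat).
Implicit Types (x y z : {set 'I_n}) (f g h : {set 'I_n} -> R).

(* The eigenvalue of [down \o up] on the eigenspace V_k of S(n, i). *)
Definition theta i k : R := (i.+1%:R - k%:R) * ((n - i)%:R - k%:R).

Lemma theta_nat i k : (k <= i.+1)%N -> (k <= n - i)%N ->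
  theta i k = ((i.+1 - k) * (n - i - k))%:R.
Proof. by move=> ki kn; rewrite /theta natrM -!natrB. Qed.

Lemma down_up_gz z x :
  down (up (gz R z)) x = theta #|x| #|z| * gz R z x
    + (#|x|.+1%:R - #|z|%:R) * \sum_(a in z) gz R (z :\ a) x.
Proof.
rewrite (eq_down (g := fun y => (#|x|.+1%:R - #|z|%:R) * gz R z y)) => [|y cy].
  by rewrite (linear_opZ (@linear_op_down R n)) down_gz /theta; ring.
by rewrite up_gz cy.
Qed.

(* [h] restricted to S(n, i) lies in U_(k-1), the span of the [gz z] with
   [#|z| < k]; [k = 0] gives the zero space. *)
Definition inUlt i k h := exists c : {set 'I_n} -> R,
  forall x, #|x| = i -> h x = \sum_(z : {set 'I_n} | (#|z| < k)%N) c z * gz R z x.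

Lemma eq_inUlt i k f g :
  inUlt i k f -> (forall x, #|x| = i -> f x = g x) -> inUlt i k g.
Proof. by move=> [c hc] fg; exists c => x cx; rewrite -fg // hc. Qed.

Lemma inUlt0 i k : inUlt i k (fun _ => 0).
Proof. by exists (fun _ => 0) => x _; rewrite big1 // => z _; rewrite mul0r. Qed.

Lemma inUltD i k f g : inUlt i k f -> inUlt i k g -> inUlt i k (fun x => f x + g x).
Proof.
case=> c hc [d hd]; exists (fun z => c z + d z) => x cx.
by rewrite hc // hd // -big_split; apply: eq_bigr => z _; rewrite mulrDl.
Qed.

Lemma inUltZ i k a f : inUlt i k f -> inUlt i k (fun x => a * f x).
Proof.
case=> c hc; exists (fun z => a * c z) => x cx.
by rewrite hc // mulr_sumr; apply: eq_bigr => z _; rewrite mulrA.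
Qed.

Lemma inUlt_sum i k (I : Type) (s : seq I) (P : pred I) (F : I -> {set 'I_n} -> R) :
  (forall j, P j -> inUlt i k (F j)) -> inUlt i k (fun x => \sum_(j <- s | P j) F j x).
Proof.
move=> hF; elim: s => [|j s IH].
  by apply: eq_inUlt (inUlt0 i k) _ => x _; rewrite big_nil.
have Fj : inUlt i k (fun x => if P j then F j x else 0).
  by case Pj: (P j); [apply: hF | apply: inUlt0].
by apply: eq_inUlt (inUltD Fj IH) _ => x _; rewrite big_cons; case: (P j) => //; rewrite add0r.
Qed.

Lemma inUlt_gz i k z : (#|z| < k)%N -> inUlt i k (gz R z).
Proof.
move=> zk; exists (dirac R z) => x _.
rewrite (bigD1 z) //= /dirac eqxx mul1r big1 ?addr0 // => w /andP[_ /negbTE ->].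
by rewrite mul0r.
Qed.

Lemma inUlt_full i f : inUlt i i.+1 f.
Proof.
exists (fun z => if #|z| == i then f z else 0) => x cx.
rewrite (bigD1 x) /=; last by rewrite cx.
rewrite cx eqxx /gz subxx mulr1 big1 ?addr0 // => z /andP[_ zx].
case: eqP => [cz | _]; last by rewrite mul0r.
case: (boolP (z \subset x)) => [zsx | _]; last by rewrite mulr0.
by case/negP: zx; rewrite eqEcard zsx cz cx leqnn.
Qed.

Lemma inUlt0_eq0 i f : inUlt i 0 f -> forall x, #|x| = i -> f x = 0.
Proof. by case=> c hc x cx; rewrite hc // big_pred0. Qed.

Lemma inU_inUlt i j h : inU i j h <-> inUlt i j.+1 h.
Proof.
have sumE (c : {set 'I_n} -> R) x : #|x| = i ->
    \sum_(z : {set 'I_n} | (#|z| <= j)%N && (#|z| <= i)%N) c z * gz R z x =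
    \sum_(z : {set 'I_n} | (#|z| < j.+1)%N) c z * gz R z x.
  move=> cx; rewrite big_mkcondr /=; apply: eq_bigr => z _.
  rewrite /gz; case: (boolP (z \subset x)) => [zx | _]; last by rewrite mulr0; case: ifP.
  by rewrite -cx subset_leq_card.
by split=> -[c hc]; exists c => x cx; rewrite hc ?sumE.
Qed.

Lemma down_up_triangular i k h : inUlt i k.+1 h ->
  inUlt i k (fun x => down (up h) x - theta i k * h x).
Proof.
case=> c hc.
have sum_gz x : #|x| = i ->
    down (up h) x = \sum_(z : {set 'I_n} | (#|z| < k.+1)%N) c z * down (up (gz R z)) x.
  move=> cx; rewrite -(linear_op_lincomb (@linear_op_down R n)).
  apply: eq_down => y cy; rewrite -(linear_op_lincomb (@linear_op_up R n)).
  by apply: eq_up => w cw; apply: hc; lia.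
pose G x := \sum_(z : {set 'I_n} | (#|z| < k.+1)%N) c z *
  ((theta i #|z| - theta i k) * gz R z x + (i.+1%:R - #|z|%:R) * \sum_(a in z) gz R (z :\ a) x).
have UG : inUlt i k G.
  apply: inUlt_sum => z zk; apply/inUltZ/inUltD.
    have [zk' | zk'] := boolP (#|z| < k)%N; first exact/inUltZ/inUlt_gz.
    apply: eq_inUlt (inUlt0 i k) _ => x _.
    by rewrite (_ : #|z| = k) ?subrr ?mul0r //; lia.
  apply/inUltZ/inUlt_sum => a az; apply: inUlt_gz.
  by rewrite (cardsD1 a z) az in zk.
apply: eq_inUlt UG _ => x cx; rewrite sum_gz // hc // mulr_sumr -sumrB.
by apply: eq_bigr => z _; rewrite down_up_gz cx; ring.
Qed.

Lemma inUlt_up i k f : inUlt i k f -> inUlt i.+1 k (up f).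
Proof.
case=> c hc; exists (fun z => c z * (i.+1%:R - #|z|%:R)) => x cx.
rewrite (eq_up (g := fun y => \sum_(z : {set 'I_n} | (#|z| < k)%N) c z * gz R z y)).
  rewrite (linear_op_lincomb (@linear_op_up R n)); apply: eq_bigr => z _.
  by rewrite up_gz cx mulrA.
by move=> y cy; apply: hc; lia.
Qed.

Lemma inUlt_down i k g : inUlt i.+1 k g -> inUlt i k (down g).
Proof.
case=> c hc.
have UG : inUlt i k (fun y => \sum_(z : {set 'I_n} | (#|z| < k)%N) c z *
    (((n - i)%:R - #|z|%:R) * gz R z y + \sum_(a in z) gz R (z :\ a) y)).
  apply: inUlt_sum => z zk; apply/inUltZ/inUltD; first exact/inUltZ/inUlt_gz.
  apply: inUlt_sum => a az; apply: inUlt_gz; apply: leq_trans zk.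
  by rewrite (cardsD1 a z) az.
apply: eq_inUlt UG _ => y cy.
rewrite (eq_down (g := fun x => \sum_(z : {set 'I_n} | (#|z| < k)%N) c z * gz R z x)).
  rewrite (linear_op_lincomb (@linear_op_down R n)); apply: eq_bigr => z _.
  by rewrite down_gz cy.
by move=> x cx; apply: hc; lia.
Qed.

(* [inV] without the case split on [t]. *)
Definition inVt i t f := inUlt i t.+1 f /\ forall g, inUlt i t g -> sdot i f g = 0.

Lemma inV_inVt i t f : inV i t f <-> inVt i t f.
Proof.
case: t => [|t]; split=> -[fU fo]; split; try exact/inU_inUlt; move=> // g.
- by move/inUlt0_eq0 => g0; rewrite sdotC; apply: sdot_eq0l.
- by move/inU_inUlt; apply: fo.
- by move/inU_inUlt; apply: fo.
Qed.

Lemma eq_inVt i t f g : inVt i t f -> (forall x, #|x| = i -> f x = g x) -> inVt i t g.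
Proof.
case=> fU fo fg; split=> [|h hU]; first exact: eq_inUlt fU fg.
by rewrite -(fo h hU); apply: eq_sdot => x /fg.
Qed.

Lemma inVtZ i t a f : inVt i t f -> inVt i t (fun x => a * f x).
Proof.
case=> fU fo; split=> [|g /fo]; first exact: inUltZ.
by rewrite sdotZl => ->; rewrite mulr0.
Qed.

Lemma inVt_up i t f : inVt i t f -> inVt i.+1 t (up f).
Proof. by case=> fU fo; split=> [|g /inUlt_down /fo]; [exact: inUlt_up | rewrite sdot_up]. Qed.

Lemma iter_up_inVt i t k f : inVt i t f -> inVt (i + k) t (iter k (@up R n) f).
Proof. by move=> fV; elim: k => [|k IH]; rewrite ?addn0 // addnS; apply: inVt_up. Qed.

End Filtration.

Section Spectral.
Variables (R : realFieldType) (n : nat).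
Implicit Types (x y z : {set 'I_n}) (f g : {set 'I_n} -> R).
Local Notation theta := (@theta R n).

Lemma sdot_self_eq0 i f : sdot i f f = 0 -> forall x, #|x| = i -> f x = 0.
Proof.
move=> ff0 x /eqP cx; apply/eqP; rewrite -[_ == 0]orbb -mulf_eq0; apply/eqP.
by apply: psumr_eq0P ff0 _ cx => y _; rewrite -expr2 sqr_ge0.
Qed.

(* [down \o up - theta i t] maps V_t into U_(t-1), to which V_t is orthogonal. *)
Lemma inVt_eigen i t f : inVt i t f ->
  forall x, #|x| = i -> down (up f) x = theta i t * f x.
Proof.
case=> fU fo; pose w x := down (up f) x - theta i t * f x.
have wU : inUlt i t w := down_up_triangular fU.
have : sdot i w w = 0.
  rewrite sdotBl sdotZl sdot_down_up !fo ?mulr0 ?subr0 //.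
  exact/inUlt_down/inUlt_up.
by move/sdot_self_eq0 => w0 x /w0 /eqP; rewrite subr_eq0 => /eqP.
Qed.

(* Both halves use [down_up_triangular]: f is pushed down from U_i to U_s,
   dividing by [theta i s - theta i k] at each step, and orthogonality to
   U_(k-1) propagates to U_k by the same division. *)
Lemma eigen_inVt i s f : (s <= i)%N ->
  (forall k, (k <= i)%N -> k != s -> theta i k != theta i s) ->
  (forall x, #|x| = i -> down (up f) x = theta i s * f x) -> inVt i s f.
Proof.
move=> si theta_dist f_eig.
have gap k : (k <= i)%N -> k != s -> theta i s - theta i k != 0.
  by move=> ki ks; rewrite subr_eq0 eq_sym theta_dist.
split.
  have lower d : (d <= i - s)%N -> inUlt i (i.+1 - d) f.
    elim: d => [_|d IH dis]; first by rewrite subn0; apply: inUlt_full.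
    have fU : inUlt i (i - d).+1 f by rewrite -subSn; [apply: IH | ]; lia.
    have := inUltZ (theta i s - theta i (i - d))^-1 (down_up_triangular fU).
    rewrite subSS => /eq_inUlt; apply=> x cx; rewrite f_eig // -mulrBl mulrA mulVf ?mul1r //.
    by apply: gap; lia.
  by have := lower _ (leqnn (i - s)); rewrite (_ : i.+1 - (i - s) = s.+1)%N //; lia.
have orth k : (k <= s)%N -> forall g, inUlt i k g -> sdot i f g = 0.
  elim: k => [_ g /inUlt0_eq0 g0|k IH ks g gU]; first by rewrite sdotC; apply: sdot_eq0l.
  have gk : theta i s - theta i k != 0 by apply: gap; lia.
  have := IH (ltnW ks) _ (down_up_triangular gU).
  rewrite sdotC sdotBl sdotZl sdotC -sdot_down_up (eq_sdot _ f_eig) sdotZl sdotC -mulrBl.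
  by move/eqP; rewrite mulf_eq0 (negbTE gk) => /eqP.
by move=> g; apply: orth.
Qed.

Lemma inVt_up_eq0 i t f : inVt i t f -> theta i t != 0 ->
  (forall x, #|x| = i.+1 -> up f x = 0) -> forall x, #|x| = i -> f x = 0.
Proof.
move=> fV th0 up0 x cx; have := inVt_eigen fV cx.
rewrite (eq_down (g := fun _ => 0)) => [|y cy]; last by apply: up0; rewrite cy cx.
rewrite (linear_op0 (@linear_op_down R n)) => /esym/eqP.
by rewrite mulf_eq0 (negbTE th0) => /eqP.
Qed.

Lemma inVt_iter_up_eq0 i t m f : inVt i t f ->
  (forall j, (j < m)%N -> theta (i + j) t != 0) ->
  (forall x, #|x| = (i + m)%N -> iter m (@up R n) f x = 0) ->
  forall x, #|x| = i -> f x = 0.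
Proof.
move=> fV; elim: m => [_ f0 | m IH th0 fm0]; first by move=> x cx; apply: f0; rewrite addn0.
apply: IH => [j jm | ]; first by apply: th0; apply: ltnW.
apply: inVt_up_eq0 (iter_up_inVt m fV) (th0 m (ltnSn m)) _ => x cx.
by apply: fm0; rewrite addnS.
Qed.

Lemma inVt_topP t f : inVt t t f <-> forall y, #|y|.+1 = t -> down f y = 0.
Proof.
split=> [[_ fo] y cy | down0].
  by rewrite down_sdot cy fo //; apply: inUlt_gz; rewrite cy.
split=> [|g [c hc]]; first exact: inUlt_full.
rewrite sdotC (eq_sdot _ hc) sdot_suml big1 // => z zt; rewrite sdotZl.
have tz : t%:R - #|z|%:R != 0 :> R by rewrite subr_eq0 eqr_nat; lia.
rewrite (eq_sdot (f' := fun x => (t%:R - #|z|%:R)^-1 * up (gz R z) x)); last first.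
  by move=> x cx; rewrite up_gz cx mulrA mulVf ?mul1r.
case: t down0 hc zt tz => // t down0 _ zt _.
by rewrite sdotZl sdot_up sdotC sdot_eq0l ?mulr0 // => y cy; apply: down0; rewrite cy.
Qed.

End Spectral.

Section RowFunctions.
Variables (R : comNzRingType) (n : nat).
Implicit Types (x y : {set 'I_n}) (S T : {set {set 'I_n}}).

(* [vfun] for an arbitrary vertex set: [vfun v] is [rowfun v] by definition. *)
Definition rowfun S (w : 'rV[R]_#|S|) x : R :=
  \sum_(k < #|S|) (if enum_val k == x then w 0 k else 0).

Definition rowof S (f : {set 'I_n} -> R) : 'rV[R]_#|S| := \row_k f (enum_val k).

Lemma rowfun_enum S (w : 'rV[R]_#|S|) k : rowfun w (enum_val k) = w 0 k.
Proof.
rewrite /rowfun (bigD1 k) //= eqxx big1 ?addr0 // => j /negbTE jk.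
by rewrite (inj_eq enum_val_inj) jk.
Qed.

Lemma rowfun_notin S (w : 'rV[R]_#|S|) x : x \notin S -> rowfun w x = 0.
Proof.
move=> xS; rewrite /rowfun big1 // => k _.
by case: eqP => // kx; rewrite -kx enum_valP in xS.
Qed.

Lemma rowofK S f x : x \in S -> rowfun (rowof S f) x = f x.
Proof. by move=> xS; rewrite -(enum_rankK_in xS xS) rowfun_enum mxE. Qed.

Lemma sum_rowfun S (w : 'rV[R]_#|S|) (F : {set 'I_n} -> R) :
  \sum_(k < #|S|) w 0 k * F (enum_val k) = \sum_y rowfun w y * F y.
Proof.
under [RHS]eq_bigr do rewrite /rowfun mulr_suml.
rewrite exchange_big; apply: eq_bigr => k _ /=.
rewrite (bigD1 (enum_val k)) //= eqxx big1 ?addr0 // => y /negbTE ky.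
by rewrite eq_sym ky mul0r.
Qed.

Definition opmx S T (L : ({set 'I_n} -> R) -> {set 'I_n} -> R) : 'M[R]_(#|S|, #|T|) :=
  \matrix_(k, j) L (dirac R (enum_val k)) (enum_val j).

Lemma mul_opmx S T L (w : 'rV_#|S|) :
  linear_op L -> w *m opmx S T L = rowof T (L (rowfun w)).
Proof.
move=> linL; apply/rowP => j; rewrite !mxE.
under eq_bigr do rewrite mxE.
by rewrite (sum_rowfun w (fun y => L (dirac R y) (enum_val j))) linL.
Qed.

End RowFunctions.

Lemma mul_adjmx (R : comNzRingType) n r (v : 'rV[R]_#|layers n r|) :
  v *m adjmx R n r = rowof (layers n r) (fun x => up (vfun v) x + down (vfun v) x).
Proof.
apply/rowP => j; rewrite !mxE -sum_hadj; under eq_bigr do rewrite mxE.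
exact: (sum_rowfun v (fun y => (hadj y (enum_val j))%:R)).
Qed.

Section TwoLayers.
Variables (R : fieldType) (n s : nat).
Implicit Types (x y : {set 'I_n}) (v : 'rV[R]_#|layers n s.+1|).
Local Notation L := (layers n s.+1).
Local Notation A := (adjmx R n s.+1).

Lemma restrE v k x : #|x| = k -> restr v k x = vfun v x.
Proof. by rewrite /restr => ->; rewrite eqxx. Qed.

Lemma restr_rowof (F : {set 'I_n} -> R) k x : (k == s) || (k == s.+1) -> #|x| = k ->
  restr (rowof L F) k x = F x.
Proof. by move=> ks cx; rewrite restrE // [vfun _ _]rowofK // inE cx. Qed.

Lemma up_down_vfun v x : x \in L -> up (vfun v) x + down (vfun v) x =
  if #|x| == s.+1 then up (restr v s) x else down (restr v s.+1) x.
Proof.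
rewrite inE; case: (eqVneq #|x| s.+1) => [cx _ | _]; last rewrite orbF => /eqP cx.
  rewrite (eq_down (g := fun _ => 0)) => [|y cy]; last first.
    by rewrite [vfun _ _]rowfun_notin // inE cy cx; lia.
  rewrite (linear_op0 (@linear_op_down R n)) addr0.
  by apply: eq_up => y cy; rewrite restrE //; lia.
rewrite (eq_up (g := fun _ => 0)) => [|y cy]; last first.
  by rewrite [vfun _ _]rowfun_notin // inE -cx -cy; lia.
rewrite (linear_op0 (@linear_op_up R n)) add0r.
by apply: eq_down => y cy; rewrite restrE //; lia.
Qed.

Lemma eigenspace_layersP a v : (v <= eigenspace A a)%MS <->
  (forall x, #|x| = s.+1 -> up (restr v s) x = a * restr v s.+1 x) /\
  (forall x, #|x| = s -> down (restr v s.+1) x = a * restr v s x).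
Proof.
have Av j : (v *m A) 0 j = if #|enum_val j| == s.+1 then up (restr v s) (enum_val j)
                           else down (restr v s.+1) (enum_val j).
  by rewrite mul_adjmx mxE up_down_vfun ?enum_valP.
have vj x (xL : x \in L) : v 0 (enum_rank_in xL x) = vfun v x.
  by rewrite -[in RHS](enum_rankK_in xL xL) [vfun _ _]rowfun_enum.
split=> [/eigenspaceP/rowP Ev | [upv downv]].
  split=> x cx.
    have xL : x \in L by rewrite inE cx eqxx orbT.
    by have := Ev (enum_rank_in xL x); rewrite Av mxE enum_rankK_in // cx eqxx vj restrE.
  have xL : x \in L by rewrite inE cx eqxx.
  have := Ev (enum_rank_in xL x).
  by rewrite Av mxE enum_rankK_in // cx (ltn_eqF (ltnSn s)) vj restrE.
apply/eigenspaceP/rowP => j; rewrite Av mxE -[v 0 j]rowfun_enum.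
have := enum_valP j; rewrite inE; case: (eqVneq #|enum_val j| s.+1) => [cj _ | _].
  by rewrite upv // restrE.
by rewrite orbF => /eqP cj; rewrite downv // restrE.
Qed.

End TwoLayers.

Definition layer n t : {set {set 'I_n}} := [set x : {set 'I_n} | #|x| == t].

Definition sublayer n t : {set {set 'I_n}} := [set x : {set 'I_n} | #|x|.+1 == t].

Lemma card_layer n t : #|layer n t| = 'C(n, t).
Proof. by rewrite card_draws card_ord. Qed.

Lemma card_layers n s : #|layers n s.+1| = ('C(n, s) + 'C(n, s.+1))%N.
Proof.
have -> : layers n s.+1 = layer n s :|: layer n s.+1 by apply/setP => x; rewrite !inE.
rewrite cardsU !card_layer (_ : layer n s :&: layer n s.+1 = set0) ?cards0 ?subn0 //.
by apply/setP => x; rewrite !inE; case: eqP => // ->; rewrite ltn_eqF.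
Qed.

Lemma mult_card n t : mult n t = (#|layer n t| - #|sublayer n t|)%N.
Proof.
rewrite /mult card_layer; case: t => [|t].
  by rewrite (_ : sublayer n 0 = set0) ?cards0 //; apply/setP => y; rewrite !inE.
by rewrite (_ : sublayer n t.+1 = layer n t) ?card_layer //; apply/setP => y; rewrite !inE.
Qed.

Lemma leq_bin_pred n t : (2 * t <= n)%N -> ('C(n, t.-1) <= 'C(n, t))%N.
Proof.
case: t => [|t] tn //=; rewrite -(@leq_pmul2l t.+1) // mul_bin_left.
by apply: leq_mul => //; lia.
Qed.

Lemma sum_mult n k : (2 * k <= n)%N -> (\sum_(t < k.+1) mult n t)%N = 'C(n, k).
Proof.
elim: k => [|k IH] kn; first by rewrite big_ord1 /mult subn0.
rewrite big_ord_recr /= IH; last by lia.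
by rewrite /mult subnKC //; apply: leq_bin_pred.
Qed.

Lemma mxrank_le_inj (F : fieldType) m p q k (K : 'M[F]_(m, p)) (Phi : 'M_(p, q))
    (B : 'M_(k, q)) :
  (K *m Phi <= B)%MS -> (forall u : 'rV_p, (u <= K)%MS -> u *m Phi = 0 -> u = 0) ->
  (\rank K <= \rank B)%N.
Proof.
move=> KB Phi_inj; rewrite -(mxrank_mul_ker K Phi).
rewrite (_ : \rank (K :&: kermx Phi) = 0%N) ?addn0; last first.
  apply/eqP; rewrite mxrank_eq0; apply/eqP/row_matrixP => i; rewrite row0; apply: Phi_inj.
    exact: submx_trans (row_sub _ _) (capmxSl _ _).
  by apply/sub_kermxP; apply: submx_trans (row_sub _ _) (capmxSr _ _).
exact: mxrankS.
Qed.

(* The kernel of [down] on S(n, t), of dimension at least [mult n t], is V_t;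
   an injective linear image of it inside [B] bounds the rank of [B]. *)
Lemma mult_le_rank (R : realFieldType) n (L : {set {set 'I_n}}) m (B : 'M[R]_(m, #|L|)) t
    (E : ({set 'I_n} -> R) -> {set 'I_n} -> R) : linear_op E ->
  (forall f, inVt t t f -> (rowof L (E f) <= B)%MS) ->
  (forall f, inVt t t f -> (forall x : {set 'I_n}, x \in L -> E f x = 0) ->
     forall x : {set 'I_n}, #|x| = t -> f x = 0) ->
  (mult n t <= \rank B)%N.
Proof.
move=> linE EB Einj; pose D := opmx (layer n t) (sublayer n t) (@down R n).
have kerD w : (w <= kermx D)%MS -> inVt t t (rowfun w).
  move/sub_kermxP; rewrite /D mul_opmx; last exact: linear_op_down.
  move/rowP => D0.
  apply/inVt_topP => y cy; have yS : y \in sublayer n t by rewrite inE cy.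
  by have := D0 (enum_rank_in yS y); rewrite !mxE enum_rankK_in.
apply: leq_trans (_ : \rank (kermx D) <= _)%N.
  by rewrite mxrank_ker mult_card leq_sub2l ?rank_leq_col.
apply: (mxrank_le_inj (Phi := opmx (layer n t) L E)).
  by apply/row_subP => i; rewrite row_mul mul_opmx //; apply/EB/kerD/row_sub.
move=> u /kerD uV; rewrite mul_opmx // => /rowP E0; apply/rowP => k.
rewrite mxE -rowfun_enum; apply: Einj uV _ _ _.
  by move=> x xL; have := E0 (enum_rank_in xL x); rewrite !mxE enum_rankK_in.
by have := enum_valP k; rewrite inE => /eqP.
Qed.

Section Eigenvectors.
Variables (R : realFieldType) (n s : nat).
Hypothesis hsn : (2 * s.+1 <= n)%N.
Implicit Types (x y : {set 'I_n}) (v : 'rV[R]_#|layers n s.+1|).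
Local Notation L := (layers n s.+1).
Local Notation A := (adjmx R n s.+1).
Local Notation theta := (@theta R n).

Lemma theta_neq k t : (k <= s)%N -> (t <= s)%N -> k != t -> theta s k != theta s t.
Proof.
move=> ks ts kt; rewrite !theta_nat ?eqr_nat; try lia.
have dec i j : (i < j <= s)%N -> ((s.+1 - j) * (n - s - j) < (s.+1 - i) * (n - s - i))%N.
  by move=> ijs; apply: ltn_mul; lia.
rewrite neq_ltn; case: (ltngtP k t) => [kt' | kt' | kt'].
- by rewrite (dec k t) ?orbT //; lia.
- by rewrite (dec t k) //; lia.
- by rewrite kt' eqxx in kt.
Qed.

Lemma eigenspace_liftP t la v : (t <= s)%N -> la != 0 -> la ^+ 2 = theta s t ->
  (v <= eigenspace A la)%MS <->
  inVt s t (restr v s) /\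
  (forall x, #|x| = s.+1 -> restr v s.+1 x = la^-1 * up (restr v s) x).
Proof.
move=> ts la0 la2; split=> [/eigenspace_layersP[upv downv] | [pV qE]].
  have qE x : #|x| = s.+1 -> restr v s.+1 x = la^-1 * up (restr v s) x.
    by move=> cx; rewrite upv // mulKf.
  split=> //; apply: eigen_inVt => // [k ks kt | x cx]; first exact: theta_neq.
  rewrite (eq_down (g := fun y => la * restr v s.+1 y)) => [|y cy]; last by apply: upv; lia.
  by rewrite (linear_opZ (@linear_op_down R n)) downv // mulrA -expr2 la2.
apply/eigenspace_layersP; split=> x cx; first by rewrite qE // mulrA mulfV ?mul1r.
rewrite (eq_down (g := fun y => la^-1 * up (restr v s) y)) => [|y cy]; last by apply: qE; lia.
by rewrite (linear_opZ (@linear_op_down R n)) (inVt_eigen pV) // -la2 expr2 -mulrA mulKf.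
Qed.

Lemma eigenspace_lift_top t la v : (t <= s)%N -> la != 0 -> la ^+ 2 = theta s t ->
  (v <= eigenspace A la)%MS -> inVt s.+1 t (restr v s.+1).
Proof.
move=> ts la0 la2 /(eigenspace_liftP _ ts la0 la2)[pV qE].
by apply: eq_inVt (inVtZ la^-1 (inVt_up pV)) _ => x cx; rewrite qE.
Qed.

Lemma eigenspace0_top v : (forall x, restr v s x = 0) ->
  inVt s.+1 s.+1 (restr v s.+1) -> (v <= eigenspace A 0)%MS.
Proof.
move=> p0 /inVt_topP q0; apply/eigenspace_layersP; split=> x cx; rewrite mul0r.
  by rewrite (eq_up (g := fun _ => 0)) ?(linear_op0 (@linear_op_up R n)).
by apply: q0; rewrite cx.
Qed.

Lemma mult_le_rank_lift t la : (t <= s)%N -> la != 0 -> la ^+ 2 = theta s t ->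
  (mult n t <= \rank (eigenspace A la))%N.
Proof.
move=> ts la0 la2; pose m := (s - t)%N; have tm : (t + m)%N = s by rewrite subnKC.
pose E f x := if #|x| == s then iter m (@up R n) f x else la^-1 * up (iter m (@up R n) f) x.
apply: (@mult_le_rank R n L _ _ t E).
- move=> f x; rewrite /E; case: ifP => _; first exact: linear_op_iter_up.
  have := linear_op_iter_up m.+1 f x; rewrite /= => ->; rewrite mulr_sumr.
  by apply: eq_bigr => y _; rewrite mulrCA.
- move=> f fV; have pV : inVt s t (iter m (@up R n) f) by rewrite -tm; apply: iter_up_inVt.
  apply/(eigenspace_liftP _ ts la0 la2); split=> [|x cx].
    by apply: eq_inVt pV _ => x cx; rewrite restr_rowof ?cx ?eqxx // /E cx eqxx.
  rewrite restr_rowof ?cx ?eqxx ?orbT // /E cx (gtn_eqF (ltnSn s)); congr (_ * _).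
  by apply: eq_up => y cy; rewrite restr_rowof ?eqxx // /E (_ : #|y| = s) ?eqxx //; lia.
- move=> f fV E0; apply: (inVt_iter_up_eq0 (m := m) fV) => [j jm | x cx].
    by rewrite theta_nat ?pnatr_eq0 ?muln_eq0; lia.
  have xL : x \in L by rewrite inE cx tm eqxx.
  by have := E0 x xL; rewrite /E cx tm eqxx.
Qed.

Lemma mult_le_rank_zero : (mult n s.+1 <= \rank (eigenspace A 0))%N.
Proof.
pose E f x : R := if #|x| == s then 0 else f x.
apply: (@mult_le_rank R n L _ _ s.+1 E).
- move=> f x; rewrite /E; case: ifP => _; last by rewrite sum_dirac.
  by rewrite big1 // => y _; rewrite mulr0.
- move=> f fV; apply: eigenspace0_top => [x|].
    have [cx | ncx] := eqVneq #|x| s; last by rewrite /restr (negbTE ncx).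
    by rewrite restr_rowof ?cx ?eqxx // /E cx eqxx.
  by apply: eq_inVt fV _ => x cx; rewrite restr_rowof ?cx ?eqxx ?orbT // /E cx gtn_eqF.
- move=> f fV E0 x cx; have xL : x \in L by rewrite inE cx eqxx orbT.
  by have := E0 x xL; rewrite /E cx gtn_eqF.
Qed.

End Eigenvectors.

Section Multiplicities.
Variables (R : rcfType) (n s : nat).
Hypothesis hsn : (2 * s.+1 <= n)%N.
Local Notation A := (adjmx R n s.+1).
Local Notation gamma t := (Num.sqrt (((s.+1 - t) * ((n - s.+1).+1 - t))%N%:R : R)).

Lemma gamma_sqr t : (t <= s)%N -> gamma t ^+ 2 = theta R n s t.
Proof.
move=> ts; rewrite sqr_sqrtr ?ler0n // theta_nat; try lia.
by rewrite (_ : (n - s.+1).+1 = n - s)%N //; lia.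
Qed.

Lemma gamma_gt0 t : (t <= s)%N -> 0 < gamma t.
Proof. by move=> ts; rewrite sqrtr_gt0 ltr0n muln_gt0; apply/andP; split; lia. Qed.

Lemma pm_gamma_neq0 t la : (t <= s)%N -> (la = gamma t \/ la = - gamma t) -> la != 0.
Proof. by move=> ts [->|->]; rewrite ?oppr_eq0 gt_eqF ?gamma_gt0. Qed.

Lemma pm_gamma_sqr t la : (t <= s)%N -> (la = gamma t \/ la = - gamma t) ->
  la ^+ 2 = theta R n s t.
Proof. by move=> ts [->|->]; rewrite ?sqrrN gamma_sqr. Qed.

Local Notation index := ('I_s.+1 + 'I_s.+1 + 'I_1)%type.

Definition eigval (i : index) : R :=
  match i with inl (inl t) => gamma t | inl (inr t) => - gamma t | inr _ => 0 end.

Definition eigmult (i : index) : nat :=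
  match i with inl (inl t) | inl (inr t) => mult n t | inr _ => mult n s.+1 end.

Lemma eigval_inj : injective eigval.
Proof.
have ts (t : 'I_s.+1) : (t <= s)%N by rewrite -ltnS.
have gt0 (t : 'I_s.+1) := gamma_gt0 (ts t).
have ginj (t t' : 'I_s.+1) : gamma t = gamma t' -> t = t'.
  move/(congr1 (fun x => x ^+ 2)); rewrite !gamma_sqr // => /eqP.
  by apply: contraTeq => tt'; apply: theta_neq.
move=> [[t|t]|o] [[t'|t']|o'] /= E; rewrite ?(ord1 o) ?(ord1 o') //.
- by rewrite (ginj _ _ E).
- by exfalso; have := gt0 t; have := gt0 t'; lra.
- by exfalso; have := gt0 t; lra.
- by exfalso; have := gt0 t; have := gt0 t'; lra.
- by rewrite (ginj _ _ (oppr_inj E)).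
- by exfalso; have := gt0 t; lra.
- by exfalso; have := gt0 t'; lra.
- by exfalso; have := gt0 t'; lra.
Qed.

Lemma eigmult_le_rank i : (eigmult i <= \rank (eigenspace A (eigval i)))%N.
Proof.
have lift (t : 'I_s.+1) la : la = gamma t \/ la = - gamma t ->
    (mult n t <= \rank (eigenspace A la))%N.
  move=> la_t; have ts : (t <= s)%N := ltn_ord t.
  by have := mult_le_rank_lift hsn ts (pm_gamma_neq0 ts la_t) (pm_gamma_sqr ts la_t).
by case: i => [[t|t]|o]; [apply: lift; left | apply: lift; right | apply: mult_le_rank_zero].
Qed.

Lemma sum_eigmult : (\sum_i eigmult i)%N = #|layers n s.+1|.
Proof.
rewrite card_layers !big_sumType big_ord1 /= sum_mult; last by lia.
by have := leq_bin_pred (t := s.+1) hsn; rewrite /mult /=; lia.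
Qed.

(* The eigenspaces of distinct eigenvalues form a direct sum, so their ranks
   add up to at most |S(n,s)| + |S(n,s+1)| = the sum of the lower bounds. *)
Lemma rank_eigval i : \rank (eigenspace A (eigval i)) = eigmult i.
Proof.
have eq_sum := leqif_sum (P := xpredT) (fun i _ => leqif_eq (eigmult_le_rank i)).
have /forallP eq_i : [forall (i | true), eigmult i == \rank (eigenspace A (eigval i))].
  rewrite -eq_sum.2 eqn_leq eq_sum.1 sum_eigmult /=.
  have /mxdirectP/= <- := mxdirect_sum_eigenspace A (in2W eigval_inj : {in predT &, _}).
  exact: rank_leq_col.
by apply/esym/eqP; apply: eq_i.
Qed.

Lemma rank_eigenspace :
  (forall t, (t <= s)%N -> \rank (eigenspace A (gamma t)) = mult n t /\
                           \rank (eigenspace A (- gamma t)) = mult n t) /\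
  \rank (eigenspace A 0) = mult n s.+1.
Proof.
split=> [t ts|]; last exact: (rank_eigval (inr ord0)).
pose t' := Ordinal (ts : (t < s.+1)%N).
by split; [have := rank_eigval (inl (inl t')) | have := rank_eigval (inl (inr t'))].
Qed.

End Multiplicities.

Theorem corollary1p11 (R : rcfType) (n r : nat)
  (hr1 : (1 <= r)%N) (hrn : (2 * r <= n)%N) :
  let A := adjmx R n r in
  let gamma := fun t : nat => Num.sqrt (((r - t) * ((n - r).+1 - t))%N%:R : R) in
  (* (i) *)
  ((forall t : nat, (t <= r.-1)%N ->
      \rank (eigenspace A (gamma t)) = mult n t /\
      \rank (eigenspace A (- gamma t)) = mult n t) /\
   \rank (eigenspace A 0) = mult n r) /\
  (* (ii) *)
  (forall (t : nat) (lam : R), (t <= r.-1)%N -> (lam = gamma t \/ lam = - gamma t) ->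
    forall v : 'rV[R]_#|layers n r|,
      ((v <= eigenspace A lam)%MS <->
         (inV r.-1 t (restr v r.-1) /\
          forall x : {set 'I_n}, #|x| = r ->
            restr v r x = lam^-1 *
              \sum_(y : {set 'I_n} | (#|y| == r.-1) && (y \subset x)) restr v r.-1 y)) /\
      ((v <= eigenspace A lam)%MS -> inV r t (restr v r))) /\
  (* (iii) *)
  (forall v : 'rV[R]_#|layers n r|,
     (forall x : {set 'I_n}, restr v r.-1 x = 0) -> inV r r (restr v r) ->
     (v <= eigenspace A 0)%MS).
Proof.
case: r hr1 hrn => // s _ hsn /=.
split; first exact: rank_eigenspace.
split=> [t la ts la_t v | v p0 /inV_inVt qV]; last exact: eigenspace0_top.
have la0 := pm_gamma_neq0 hsn ts la_t; have la2 := pm_gamma_sqr hsn ts la_t.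
split=> [|/(eigenspace_lift_top hsn ts la0 la2) /inV_inVt //].
split=> [/(eigenspace_liftP hsn _ ts la0 la2)[pV qE] | [/inV_inVt pV qE]].
  by split=> [|x cx]; [apply/inV_inVt | rewrite qE // (up_layerE _ cx)].
apply/(eigenspace_liftP hsn _ ts la0 la2); split=> // x cx.
by rewrite qE // (up_layerE _ cx).
Qed.
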